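(* Let $\epsilon:B\to A$ (with section $j$) be a local augmentation; regard $A\subset B$ via $j$, let $I=\ker(\epsilon)$, and let $B^\bullet$ denote the group of units of $B$. For a subset $S\subset B\times B$ such that $1+ba\in B^\bullet$ for all $(a,b)\in S$, put $$C(S)=\epsilon^{-1}(1)\cap\langle(1+ab)(1+ba)^{-1}\mid(a,b)\in S\rangle .$$ Then: 1. $C(\{(a,b):\epsilon(a)=0\})=C(\{(a,b):\epsilon(ab)=\epsilon(ba)=0\})=C(\{(a,b):\epsilon(ba)=0\})=C(\{(a,b):1+ba\in B^\bullet\})$. 2. $[B^\bullet,B^\bullet]\cap\epsilon^{-1}(1)=C(\{(a,b):b\in B^\bullet,\ 1+ba\in B^\bullet\})$. 3. $[\epsilon^{-1}(1),\epsilon^{-1}(1)]=C(\{(a,b):\epsilon(a)=0,\ \epsilon(b)=\zeta\})$ for any $\zeta\in A$ which commutes with every element of $I$. In particular, $$[\epsilon^{-1}(1),\epsilon^{-1}(1)]\subset[B^\bullet,B^\bullet]\cap\epsilon^{-1}(1)\subset C:=C(\{(a,b):\epsilon(ab)=\epsilon(ba)=0\}),$$ and $C$ is a normal subgroup of $\epsilon^{-1}(1)$ with abelian quotient.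
   Context: Rings are associative with $1$. An augmentation is a pair of ring homomorphisms $\epsilon:B\to A$, $j:A\to B$ with $\epsilon j=\mathrm{id}_A$; it is a local augmentation if every square matrix $\alpha$ over $B$ with $\epsilon(\alpha)$ invertible is itself invertible. $\langle\cdot\rangle$ denotes the subgroup of $B^\bullet$ generated, and $[G,G]$ the commutator subgroup. (In each listed set $S$ the condition $1+ba\in B^\bullet$ holds automatically by locality, or is imposed.) *)

From HB Require Import structures.
From mathcomp Require Import all_boot all_order all_algebra.
Set Implicit Arguments. Unset Strict Implicit. Unset Printing Implicit Defensive.
Import GRing.Theory.
Local Open Scope ring_scope.

Definition mx_invertible (R : nzRingType) (n : nat) (M : 'M[R]_n) : Prop :=
  exists N : 'M[R]_n, M *m N = 1%:M /\ N *m M = 1%:M.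

Definition augmentation (A : nzRingType) (B : unitRingType)
  (eps : {rmorphism B -> A}) (j : {rmorphism A -> B}) : Prop :=
  forall a : A, eps (j a) = a.

Definition local_augmentation (A : nzRingType) (B : unitRingType)
  (eps : {rmorphism B -> A}) (j : {rmorphism A -> B}) : Prop :=
  augmentation eps j /\
  forall (n : nat) (M : 'M[B]_n),
    mx_invertible (map_mx eps M) -> mx_invertible M.

Inductive gen (B : unitRingType) (P : B -> Prop) : B -> Prop :=
| gen1 : gen P 1
| genP x : P x -> gen P x
| genM x y : gen P x -> gen P y -> gen P (x * y)
| genV x : gen P x -> gen P x^-1.

Definition commutator_subgroup (B : unitRingType) (G : B -> Prop) : B -> Prop :=
  gen (fun z => exists x y, G x /\ G y /\ z = x^-1 * y^-1 * x * y).

Definition units_of (B : unitRingType) : B -> Prop := fun x => x \is a GRing.unit.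

Definition eps1 (A : nzRingType) (B : unitRingType) (eps : {rmorphism B -> A})
  : B -> Prop := fun x => eps x = 1.

Definition Cset (A : nzRingType) (B : unitRingType) (eps : {rmorphism B -> A})
  (S : B -> B -> Prop) : B -> Prop :=
  fun x => eps x = 1 /\
    gen (fun y => exists a b, S a b /\ y = (1 + a * b) * (1 + b * a)^-1) x.

Definition set_eq (B : Type) (P Q : B -> Prop) : Prop := forall x, P x <-> Q x.
Definition set_sub (B : Type) (P Q : B -> Prop) : Prop := forall x, P x -> Q x.

From HB Require Import structures.
From mathcomp Require Import all_boot all_order all_algebra.
Import GRing.Theory.
Set Implicit Arguments. Unset Strict Implicit. Unset Printing Implicit Defensive.
Local Open Scope ring_scope.

(* Write g(a, b) = (1 + ab)(1 + ba)^-1 ([twist a b]) and let N ([Neps]) be the group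
   generated by the g(a, b) with eps a = 0.  Conjugating g(a, b) by a unit u gives
   g(u^-1 a u, u^-1 b u), so N is normal in the unit group.  Replacing a by a + a1
   or b by b + b1 with a1, b1 in I = ker eps multiplies g(a, b) on the left by an
   element of N.  Since j (eps (g(a, b))) = g(j (eps a), j (eps b)) and
   a - j (eps a), b - j (eps b) lie in I, every x generated by g(a, b)'s satisfies
   x (j (eps x))^-1 \in N, which gives part 1: locality makes 1 + ba a unit as soon
   as eps (ba) = 0.  Parts 2 and 3 come from the identities
   [x, y] = g(x^-1 (y^-1 - 1), x),  g(a, b) = [b, (1 + ba)^-1]  and
   g(a, z + b) = g(a, b (1 + za)^-1) for z commuting with a. *)

Lemma set_eq_via (T : Type) (R P Q : T -> Prop) :
  set_eq P R -> set_eq Q R -> set_eq P Q.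
Proof. by move=> hP hQ x; split=> [/hP/hQ | /hQ/hP]. Qed.

Section Twists.

Variable B : unitRingType.
Implicit Types a b u x y z : B.

Definition twist a b := (1 + a * b) * (1 + b * a)^-1.

Definition twists (S : B -> B -> Prop) y := exists a b, S a b /\ y = twist a b.

Definition conjr u x := u^-1 * x * u.

Definition commr x y := x^-1 * y^-1 * x * y.

Definition commutators (G : B -> Prop) y := exists x z, G x /\ G z /\ y = commr x z.

Lemma mul1Dl_swap a b : (1 + a * b) * a = a * (1 + b * a).
Proof. by rewrite mulrDl mul1r mulrDr mulr1 mulrA. Qed.

Lemma mul1Dr_swap a b : b * (1 + a * b) = (1 + b * a) * b.
Proof. by rewrite mulrDr mulr1 mulrDl mul1r mulrA. Qed.

(* Jacobson: (1 + ab)^-1 = 1 - a (1 + ba)^-1 b. *)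
Lemma unitr1D_swap a b :
  1 + b * a \is a GRing.unit -> 1 + a * b \is a GRing.unit.
Proof.
move=> hv; apply/unitrP; exists (1 - a * (1 + b * a)^-1 * b); split.
  by rewrite mulrBl mul1r -!mulrA mul1Dr_swap (mulKr hv) addrK.
by rewrite mulrBr mulr1 !mulrA mul1Dl_swap (mulrK hv) addrK.
Qed.

Lemma twist_unit a b : 1 + b * a \is a GRing.unit -> twist a b \is a GRing.unit.
Proof. by move=> hv; rewrite unitrMl ?unitrV //; apply: unitr1D_swap. Qed.

Lemma twistV a b : 1 + b * a \is a GRing.unit -> (twist b a)^-1 = twist a b.
Proof. by move=> hv; rewrite invrM ?unitrV ?invrK //; apply: unitr1D_swap. Qed.

Lemma conjrM u x y : u \is a GRing.unit -> conjr u (x * y) = conjr u x * conjr u y.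
Proof. by move=> hu; rewrite /conjr !mulrA (mulrK hu). Qed.

Lemma conjrD u x y : conjr u (x + y) = conjr u x + conjr u y.
Proof. by rewrite /conjr mulrDr mulrDl. Qed.

Lemma conjr1 u : u \is a GRing.unit -> conjr u 1 = 1.
Proof. by move=> hu; rewrite /conjr mulr1 mulVr. Qed.

Lemma conjrV u x : u \is a GRing.unit -> x \is a GRing.unit ->
  conjr u x^-1 = (conjr u x)^-1.
Proof.
by move=> hu hx; rewrite /conjr !invrM ?unitrMr ?unitrV // invrK mulrA.
Qed.

Lemma conjr_twist u a b : u \is a GRing.unit -> 1 + b * a \is a GRing.unit ->
  conjr u (twist a b) = twist (conjr u a) (conjr u b).
Proof.
move=> hu hv; rewrite /twist conjrM // conjrV //.
by rewrite !conjrD conjr1 // !conjrM.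
Qed.

Lemma twist_addl a a1 b : 1 + b * a \is a GRing.unit ->
  1 + b * ((1 + a * b)^-1 * a1) \is a GRing.unit ->
  twist (a + a1) b = conjr (1 + a * b)^-1 (twist ((1 + a * b)^-1 * a1) b) * twist a b.
Proof.
move=> hv ht; have hu := unitr1D_swap hv.
have e1 : 1 + (a + a1) * b = (1 + a * b) * (1 + ((1 + a * b)^-1 * a1) * b).
  by rewrite [RHS]mulrDr mulr1 !mulrA (mulrV hu) mul1r mulrDl addrA.
have e2 : 1 + b * (a + a1) = (1 + b * a) * (1 + b * ((1 + a * b)^-1 * a1)).
  by rewrite [RHS]mulrDr mulr1 !mulrA -mul1Dr_swap (mulrK hu) mulrDr addrA.
by rewrite /twist e1 e2 invrM // /conjr invrK !mulrA (mulrVK hu).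
Qed.

Lemma twist_commr a b : b \is a GRing.unit -> 1 + b * a \is a GRing.unit ->
  twist a b = commr b (1 + b * a)^-1.
Proof.
move=> hb hv; rewrite /commr invrK /twist.
by rewrite -[1 + a * b](mulKr hb) mul1Dr_swap !mulrA.
Qed.

Lemma commr_twist x y : x \is a GRing.unit -> y \is a GRing.unit ->
  commr x y = twist (x^-1 * (y^-1 - 1)) x.
Proof.
move=> hx hy; have e : 1 + x * (x^-1 * (y^-1 - 1)) = y^-1.
  by rewrite mulrA (mulrV hx) mul1r addrC subrK.
by rewrite twist_commr ?e ?invrK ?unitrV.
Qed.

Lemma twist_shift a b z : a * z = z * a -> 1 + z * a \is a GRing.unit ->
  1 + (z + b) * a \is a GRing.unit ->
  twist a (z + b) = twist a (b * (1 + z * a)^-1).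
Proof.
move=> hz hu hw; set u := 1 + z * a.
have hua : u * a = a * u by rewrite /u mulrDl mulrDr mul1r mulr1 mulrA hz.
have huVa : u^-1 * a = a * u^-1.
  by apply: (mulrI hu); rewrite mulrA (mulrV hu) mul1r mulrA hua (mulrK hu).
have e1 : 1 + a * (z + b) = (u + a * b) * u^-1 * u.
  by rewrite (mulrVK hu) mulrDr addrA hz.
have e2 : 1 + (z + b) * a = (u + b * a) * u^-1 * u.
  by rewrite (mulrVK hu) mulrDl addrA.
have e3 : 1 + a * (b * u^-1) = (u + a * b) * u^-1.
  by rewrite mulrDl (mulrV hu) mulrA.
have e4 : 1 + (b * u^-1) * a = (u + b * a) * u^-1.
  by rewrite -mulrA huVa mulrA mulrDl (mulrV hu).
move: hw; rewrite /twist e1 e2 e3 e4 unitrMl // => hw.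
by rewrite invrM // mulrA (mulrK hu).
Qed.

Lemma commutators_units_twists y :
  commutators (@units_of B) y <->
  twists (fun a b => b \is a GRing.unit /\ 1 + b * a \is a GRing.unit) y.
Proof.
split=> [[x [z [hx [hz ->]]]] | [a [b [[hb hv] ->]]]].
  exists (x^-1 * (z^-1 - 1)), x; rewrite commr_twist //; split=> //.
  by rewrite mulrA (mulrV hx) mul1r addrC subrK unitrV.
by exists b, (1 + b * a)^-1; rewrite /units_of unitrV twist_commr.
Qed.

End Twists.

Section Generated.

Variable B : unitRingType.
Implicit Types (P Q : B -> Prop) (u x : B).

Lemma gen_sub P Q x : (forall y, P y -> gen Q y) -> gen P x -> gen Q x.
Proof.
move=> hPQ; elim=> [|y /hPQ //|y z _ hy _ hz|y _ hy].
- exact: gen1.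
- exact: genM.
- exact: genV.
Qed.

Lemma gen_ext P Q x : (forall y, P y <-> Q y) -> gen P x <-> gen Q x.
Proof. by move=> hPQ; split; apply: gen_sub => y /hPQ; apply: genP. Qed.

Lemma gen_unit P x : (forall y, P y -> y \is a GRing.unit) -> gen P x ->
  x \is a GRing.unit.
Proof.
move=> hP; elim=> [|y /hP //|y z _ hy _ hz|y _ hy].
- exact: unitr1.
- by rewrite unitrMl.
- by rewrite unitrV.
Qed.

Lemma gen_conjr P u x : u \is a GRing.unit -> (forall y, P y -> y \is a GRing.unit) ->
  (forall y, P y -> P (conjr u y)) -> gen P x -> gen P (conjr u x).
Proof.
move=> hu hP hPu; elim=> [|y /hPu /genP //|y z _ hy _ hz|y hy1 hy].
- by rewrite conjr1 //; exact: gen1.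
- by rewrite conjrM //; exact: genM.
- by rewrite conjrV //; [exact: genV | exact: gen_unit hP hy1].
Qed.

End Generated.

Section Augmentation.

Variables (A : nzRingType) (B : unitRingType).
Variables (eps : {rmorphism B -> A}) (j : {rmorphism A -> B}).
Implicit Types (S : B -> B -> Prop) (a b u x y : B).

Lemma Cset_sub S S' x : (forall a b, S a b -> S' a b) -> Cset eps S x -> Cset eps S' x.
Proof.
move=> hS [ex hx]; split=> //; apply: gen_sub hx => _ [a [b [hab ->]]].
by apply: genP; exists a, b; split; first exact: hS.
Qed.

Lemma commutator_units_eps1 :
  set_eq (fun x => commutator_subgroup (@units_of B) x /\ eps1 eps x)
         (Cset eps (fun a b => b \is a GRing.unit /\ 1 + b * a \is a GRing.unit)).
Proof.
move=> x; have hU := gen_ext x (@commutators_units_twists B).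
by split=> -[h1 h2]; split; [ | exact: hU.1 | exact: hU.2 | ].
Qed.

Lemma jeps_unit x : x \is a GRing.unit -> j (eps x) \is a GRing.unit.
Proof. by move=> hx; rewrite -[j (eps x)]/((j \o eps) x) rmorph_unit. Qed.

Lemma jepsV x : x \is a GRing.unit -> j (eps x^-1) = (j (eps x))^-1.
Proof. by move=> hx; rewrite -[LHS]/((j \o eps) x^-1) rmorphV. Qed.

Hypothesis loc : local_augmentation eps j.

Lemma local_unit x (y : A) : eps x * y = 1 -> y * eps x = 1 -> x \is a GRing.unit.
Proof.
move=> h1 h2; have [N [hN1 hN2]] : mx_invertible (\matrix_(i < 1, k < 1) x).
  apply: loc.2; exists (\matrix_(i < 1, k < 1) y).
  by split; apply/matrixP => i k; rewrite !mxE big_ord1 !mxE (ord1 i) (ord1 k).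
move: hN1 hN2 => /matrixP/(_ ord0 ord0) + /matrixP/(_ ord0 ord0).
rewrite !mxE !big_ord1 !mxE => e1 e2.
by apply/unitrP; exists (N ord0 ord0).
Qed.

Lemma local_unit_eq x x' : x \is a GRing.unit -> eps x' = eps x -> x' \is a GRing.unit.
Proof.
move=> hx e; apply: (local_unit (y := eps x^-1)).
  by rewrite e -rmorphM mulrV // rmorph1.
by rewrite e -rmorphM mulVr // rmorph1.
Qed.

Lemma local_unit_eps1 x : eps x = 1 -> x \is a GRing.unit.
Proof. by move=> e; apply: (local_unit_eq (unitr1 B)); rewrite rmorph1. Qed.

Lemma local_unit1D x : eps x = 0 -> 1 + x \is a GRing.unit.
Proof. by move=> e; apply: local_unit_eps1; rewrite rmorphD rmorph1 e addr0. Qed.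

Lemma eps1V x : eps x = 1 -> eps x^-1 = 1.
Proof.
move=> e; rewrite -[eps x^-1]mul1r -{1}e -rmorphM mulrV ?rmorph1 //.
exact: local_unit_eps1.
Qed.

Lemma gen_eps1 P x : (forall y, P y -> eps y = 1) -> gen P x -> eps x = 1.
Proof.
move=> hP; elim=> [|y /hP //|y z _ hy _ hz|y _ hy].
- exact: rmorph1.
- by rewrite rmorphM hy hz mulr1.
- exact: eps1V.
Qed.

Lemma jK : cancel j eps.
Proof. exact: loc.1. Qed.

Definition Neps : B -> Prop := gen (twists (fun a (_ : B) => eps a = 0)).

Lemma twists_ker_unit y : twists (fun a (_ : B) => eps a = 0) y -> y \is a GRing.unit.
Proof.
by move=> [a [b [ea ->]]]; apply/twist_unit/local_unit1D; rewrite rmorphM ea mulr0.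
Qed.

Lemma Neps_unit x : Neps x -> x \is a GRing.unit.
Proof. exact: gen_unit twists_ker_unit. Qed.

Lemma Neps_conjr u x : u \is a GRing.unit -> Neps x -> Neps (conjr u x).
Proof.
move=> hu; apply: gen_conjr => //; first exact: twists_ker_unit.
move=> _ [a [b [ea ->]]].
have hv : 1 + b * a \is a GRing.unit by apply: local_unit1D; rewrite rmorphM ea mulr0.
exists (conjr u a), (conjr u b); rewrite conjr_twist //.
by split=> //; rewrite !rmorphM ea mulr0 mul0r.
Qed.

Lemma twist_addl_Neps a a1 b : 1 + b * a \is a GRing.unit -> eps a1 = 0 ->
  exists2 n, Neps n & twist (a + a1) b = n * twist a b.
Proof.
move=> hv ea1; have hu := unitr1D_swap hv.
have ht : 1 + b * ((1 + a * b)^-1 * a1) \is a GRing.unit.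
  by apply: local_unit1D; rewrite !rmorphM ea1 !mulr0.
exists (conjr (1 + a * b)^-1 (twist ((1 + a * b)^-1 * a1) b)); last exact: twist_addl.
apply: Neps_conjr; first by rewrite unitrV.
by apply: genP; exists ((1 + a * b)^-1 * a1), b; rewrite rmorphM ea1 mulr0.
Qed.

Lemma twist_addr_Neps a b b1 : 1 + b * a \is a GRing.unit -> eps b1 = 0 ->
  exists2 n, Neps n & twist a (b + b1) = n * twist a b.
Proof.
move=> hv eb1; have hu := unitr1D_swap hv.
have [n hn e] := twist_addl_Neps hu eb1.
have hw : 1 + (b + b1) * a \is a GRing.unit.
  by apply: (local_unit_eq hv); rewrite !rmorphD !rmorphM rmorphD eb1 addr0.
exists (conjr (twist a b)^-1 n^-1).
  by apply: Neps_conjr; [rewrite unitrV twist_unit | exact: genV].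
have hnU := Neps_unit hn; have hbaU := twist_unit hu.
rewrite -(twistV hw) e invrM // (twistV hv).
by rewrite /conjr invrK (mulrVK (twist_unit hv)).
Qed.

Lemma twist_jepsV_Neps a b : 1 + b * a \is a GRing.unit ->
  Neps (twist a b * (j (eps (twist a b)))^-1).
Proof.
move=> hv; set a0 := j (eps a); set b0 := j (eps b).
have ea0 : eps a0 = eps a by rewrite /a0 jK.
have eb0 : eps b0 = eps b by rewrite /b0 jK.
have hv0 : 1 + b * a0 \is a GRing.unit.
  by apply: (local_unit_eq hv); rewrite !rmorphD !rmorphM ea0.
have hv00 : 1 + b0 * a0 \is a GRing.unit.
  by apply: (local_unit_eq hv); rewrite !rmorphD !rmorphM ea0 eb0.
have e : j (eps (twist a b)) = twist a0 b0.
  by rewrite /twist !rmorphM jepsV // !rmorphD !rmorph1 !rmorphM.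
have ea1 : eps (a - a0) = 0 by rewrite rmorphB ea0 subrr.
have eb1 : eps (b - b0) = 0 by rewrite rmorphB eb0 subrr.
have [n1 hn1 e1] := twist_addl_Neps hv0 ea1.
have [n2 hn2 e2] := twist_addr_Neps hv00 eb1.
move: e1 e2; rewrite addrC subrK addrC subrK => e1 e2.
by rewrite e e1 e2 mulrA (mulrK (twist_unit hv00)); apply: genM.
Qed.

Lemma gen_unit1D_jepsV_Neps x :
  gen (twists (fun a b => 1 + b * a \is a GRing.unit)) x -> Neps (x * (j (eps x))^-1).
Proof.
have hU y : twists (fun a b => 1 + b * a \is a GRing.unit) y -> y \is a GRing.unit.
  by move=> [a [b [hv ->]]]; exact: twist_unit.
elim=> [|_ [a [b [hv ->]]]|x1 y hx1 IHx hy IHy|y hy IHy].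
- by rewrite !rmorph1 invr1 mulr1; exact: gen1.
- exact: twist_jepsV_Neps.
- have hx1U := gen_unit hU hx1; have hyU := gen_unit hU hy.
  have -> : x1 * y * (j (eps (x1 * y)))^-1 =
      conjr x1^-1 (y * (j (eps y))^-1) * (x1 * (j (eps x1))^-1).
    by rewrite !rmorphM invrM ?jeps_unit // /conjr invrK !mulrA (mulrVK hx1U).
  by apply: genM => //; apply: Neps_conjr; rewrite ?unitrV.
- have hyU := gen_unit hU hy.
  have -> : y^-1 * (j (eps y^-1))^-1 = conjr y ((y * (j (eps y))^-1)^-1).
    rewrite jepsV // invrK /conjr invrM ?unitrV ?jeps_unit //.
    by rewrite invrK !mulrA (mulrVK hyU).
  by apply: Neps_conjr => //; exact: genV.
Qed.

Lemma Cset_unit1D_ker x : Cset eps (fun a b => 1 + b * a \is a GRing.unit) x ->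
  Cset eps (fun a (_ : B) => eps a = 0) x.
Proof.
move=> [ex hx]; split=> //.
by move: (gen_unit1D_jepsV_Neps hx); rewrite ex rmorph1 invr1 mulr1.
Qed.

Lemma Cset_eq_ker S : (forall a b, eps a = 0 -> S a b) ->
  (forall a b, S a b -> 1 + b * a \is a GRing.unit) ->
  set_eq (Cset eps S) (Cset eps (fun a (_ : B) => eps a = 0)).
Proof.
by move=> h0 hS x; split=> [/(Cset_sub hS)/Cset_unit1D_ker | ]; apply: Cset_sub.
Qed.

Lemma Cset_ker_conjr u x : eps u = 1 -> Cset eps (fun a (_ : B) => eps a = 0) x ->
  Cset eps (fun a (_ : B) => eps a = 0) (conjr u x).
Proof.
move=> eu [ex hx]; split; last exact: Neps_conjr (local_unit_eps1 eu) hx.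
by rewrite !rmorphM eps1V // eu ex !mulr1.
Qed.

Lemma commutators_eps1_twists y :
  commutators (eps1 eps) y <-> twists (fun a b => eps a = 0 /\ eps b = 1) y.
Proof.
split=> [[x [z [ex [ez ->]]]] | [a [b [[ea eb] ->]]]].
  have hx := local_unit_eps1 ex; have hz := local_unit_eps1 ez.
  exists (x^-1 * (z^-1 - 1)), x; rewrite commr_twist //.
  by rewrite rmorphM rmorphB rmorph1 (eps1V ex) (eps1V ez) subrr mulr0.
have hv : 1 + b * a \is a GRing.unit by apply: local_unit1D; rewrite rmorphM ea mulr0.
exists b, (1 + b * a)^-1; rewrite (twist_commr (local_unit_eps1 eb) hv).
do 2 split=> //.
by apply: eps1V; rewrite rmorphD rmorph1 rmorphM ea mulr0 addr0.
Qed.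

Lemma twist_shift_ker a b z : eps a = 0 -> a * z = z * a ->
  twist a (z + b) = twist a (b * (1 + z * a)^-1).
Proof.
by move=> ea hz; apply: twist_shift => //; apply: local_unit1D; rewrite rmorphM ea mulr0.
Qed.

Lemma twists_ker_shift zeta y : (forall i, eps i = 0 -> j zeta * i = i * j zeta) ->
  twists (fun a b => eps a = 0 /\ eps b = zeta) y <->
  twists (fun a b => eps a = 0 /\ eps b = 0) y.
Proof.
move=> hz; split=> -[a [b [[ea eb] ->]]]; have hza := esym (hz a ea).
  exists a, ((b - j zeta) * (1 + j zeta * a)^-1); split.
    by split=> //; rewrite rmorphM rmorphB jK eb subrr mul0r.
  by rewrite -twist_shift_ker // addrC subrK.
have hu : 1 + j zeta * a \is a GRing.unit.
  by apply: local_unit1D; rewrite rmorphM ea mulr0.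
exists a, (j zeta + b * (1 + j zeta * a)); split.
  by split=> //; rewrite rmorphD rmorphM eb mul0r jK addr0.
by rewrite twist_shift_ker // mulrK.
Qed.

Lemma commutator_subgroup_eps1 x : commutator_subgroup (eps1 eps) x -> eps1 eps x.
Proof.
apply: gen_eps1 => _ [y [z [ey [ez ->]]]].
by rewrite !rmorphM (eps1V ey) (eps1V ez) ey ez !mulr1.
Qed.

Lemma commutator_subgroup_eps1_units :
  set_sub (commutator_subgroup (eps1 eps))
          (fun x => commutator_subgroup (@units_of B) x /\ eps1 eps x).
Proof.
move=> x hc; split; last exact: commutator_subgroup_eps1.
apply: gen_sub hc => _ [y [z [ey [ez ->]]]]; apply: genP.
by exists y, z; rewrite /units_of (local_unit_eps1 ey) (local_unit_eps1 ez).
Qed.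

Lemma commutator_eps1_Cset zeta : (forall i, eps i = 0 -> j zeta * i = i * j zeta) ->
  set_eq (commutator_subgroup (eps1 eps))
         (Cset eps (fun a b => eps a = 0 /\ eps b = zeta)).
Proof.
move=> hz x.
have h1 i : eps i = 0 -> j 1 * i = i * j 1 by rewrite rmorph1 mul1r mulr1.
have hE y :
    commutators (eps1 eps) y <-> twists (fun a b => eps a = 0 /\ eps b = zeta) y.
  split.
    by move/commutators_eps1_twists/(twists_ker_shift _ h1)/(twists_ker_shift _ hz).
  by move/(twists_ker_shift _ hz)/(twists_ker_shift _ h1)/commutators_eps1_twists.
split=> [hc | [_ hx]]; last exact: (gen_ext x hE).2.
by split; [exact: commutator_subgroup_eps1 | exact: (gen_ext x hE).1].
Qed.

End Augmentation.

Theorem proposition3p4 (A : nzRingType) (B : unitRingType)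
  (eps : {rmorphism B -> A}) (j : {rmorphism A -> B}) :
  local_augmentation eps j ->
  let C := Cset eps (fun a b => eps (a * b) = 0 /\ eps (b * a) = 0) in
  let E := eps1 eps in
  (* part 1 *)
  (set_eq (Cset eps (fun a b => eps a = 0)) C /\
   set_eq C (Cset eps (fun a b => eps (b * a) = 0)) /\
   set_eq (Cset eps (fun a b => eps (b * a) = 0))
          (Cset eps (fun a b => (1 + b * a) \is a GRing.unit))) /\
  (* part 2 *)
  set_eq (fun x => commutator_subgroup (@units_of B) x /\ E x)
         (Cset eps (fun a b => b \is a GRing.unit /\ (1 + b * a) \is a GRing.unit)) /\
  (* part 3 *)
  (forall zeta : A, (forall i : B, eps i = 0 -> j zeta * i = i * j zeta) ->
     set_eq (commutator_subgroup E)
            (Cset eps (fun a b => eps a = 0 /\ eps b = zeta))) /\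
  (* in particular *)
  set_sub (commutator_subgroup E) (fun x => commutator_subgroup (@units_of B) x /\ E x) /\
  set_sub (fun x => commutator_subgroup (@units_of B) x /\ E x) C /\
  (* C is a normal subgroup of E with abelian quotient *)
  set_sub C E /\ C 1 /\
  (forall x y, C x -> C y -> C (x * y)) /\ (forall x, C x -> C x^-1) /\
  (forall x c, E x -> C c -> C (x^-1 * c * x)) /\
  (forall x y, E x -> E y -> C ((x * y)^-1 * (y * x))).
Proof.
move=> loc C E; pose K := Cset eps (fun a (_ : B) => eps a = 0).
have ker_ba a b : eps a = 0 -> eps (b * a) = 0 by move=> ea; rewrite rmorphM ea mulr0.
have ker_ab a b : eps a = 0 -> eps (a * b) = 0 by move=> ea; rewrite rmorphM ea mul0r.
have unit1D := local_unit1D loc.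
have e1 : set_eq (Cset eps (fun a b => eps a = 0)) K :=
  Cset_eq_ker loc (fun _ _ ea => ea) (fun a b ea => unit1D _ (ker_ba a b ea)).
have eC : set_eq C K := Cset_eq_ker loc
  (fun a b ea => conj (ker_ab a b ea) (ker_ba a b ea)) (fun _ _ h => unit1D _ h.2).
have e3 : set_eq (Cset eps (fun a b => eps (b * a) = 0)) K :=
  Cset_eq_ker loc ker_ba (fun _ _ => unit1D _).
have e4 : set_eq (Cset eps (fun a b => 1 + b * a \is a GRing.unit)) K :=
  Cset_eq_ker loc (fun a b ea => unit1D _ (ker_ba a b ea)) (fun _ _ h => h).
have EE_sub := commutator_subgroup_eps1_units loc.
have UU_sub : set_sub (fun x => commutator_subgroup (@units_of B) x /\ E x) C.
  move=> x /(commutator_units_eps1 eps x) h; apply/eC/e4.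
  by apply: Cset_sub h => a b [].
split; first by split; [|split];
  [exact: set_eq_via e1 eC | exact: set_eq_via eC e3 | exact: set_eq_via e3 e4].
split; first exact: commutator_units_eps1.
split; first exact: commutator_eps1_Cset loc.
do 2 (split=> //).
split; first by move=> x [].
split; first by split; [exact: rmorph1 | exact: gen1].
split.
  by move=> x y [ex hx] [ey hy]; split; [rewrite rmorphM ex ey mulr1 | exact: genM].
split; first by move=> x [ex hx]; split; [exact: (eps1V loc) | exact: genV].
split; first by move=> x c ex /eC hc; apply/eC; exact: (Cset_ker_conjr loc ex hc).
move=> x y ex ey; rewrite invrM ?(local_unit_eps1 loc) // mulrA.
by apply/UU_sub/EE_sub/genP; exists y, x.
Qed.
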